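(* Let $s$ be an indeterminate; for an integer $k\ge 0$ put $\{k\}_s=s^k-s^{-k}$ and $\{k\}_s!=\{1\}_s\{2\}_s\cdots\{k\}_s$ (with $\{0\}_s!=1$). For positive integers $m,n$ let \[V_W(m,n)=\sum_{i=0}^{\min(m,n)-1}(-1)^{m+n}s^{-\frac{i^2+3i}{2}}\frac{\{m+i\}_s!\,\{n+i\}_s!\,\{i\}_s!}{\{1\}_s\,\{m-i-1\}_s!\,\{n-i-1\}_s!\,\{2i+1\}_s!}\] (the colored Jones polynomial of the Whitehead link). Let $E_m,E_n,Q_m,Q_n$ act on functions $f(m,n)$ by $(E_mf)(m,n)=f(m+1,n)$, $(E_nf)(m,n)=f(m,n+1)$, $(Q_mf)(m,n)=s^mf(m,n)$, $(Q_nf)(m,n)=s^nf(m,n)$. Then \[A^{\mathrm{bi}}_{s;mn}(W)=(E_n-sQ_n^2)(sQ_m^2E_m-1)-(E_m-sQ_m^2)(sQ_n^2E_n-1)\] satisfies $A^{\mathrm{bi}}_{s;mn}(W)\,V_W=0$.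
   Context: Products of operators are compositions; in particular $E_mQ_m=sQ_mE_m$, $E_nQ_n=sQ_nE_n$, and $E_m$ commutes with $Q_n$ and $E_n$, $E_n$ commutes with $Q_m$. *)

From HB Require Import structures.
From mathcomp Require Import all_boot all_order all_algebra.
Set Implicit Arguments. Unset Strict Implicit. Unset Printing Implicit Defensive.
Import Order.TTheory GRing.Theory Num.Theory.
Local Open Scope ring_scope.

Section Defs.
Variable F : fieldType.
Variable s : F.

Definition qint (k : nat) : F := s ^+ k - s ^- k.
Definition qfact (k : nat) : F := \prod_(1 <= j < k.+1) qint j.

(* colored Jones polynomial of the Whitehead link; (i^2+3i)/2 is an integer *)
Definition VW (m n : nat) : F :=
  \sum_(i < minn m n)
    (-1) ^+ (m + n) * s ^- ((i * i + 3 * i) %/ 2)%N *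
    (qfact (m + i) * qfact (n + i) * qfact i) /
    (qint 1 * qfact (m - i - 1) * qfact (n - i - 1) * qfact (2 * i + 1)).

Definition Em (f : nat -> nat -> F) : nat -> nat -> F := fun m n => f m.+1 n.
Definition En (f : nat -> nat -> F) : nat -> nat -> F := fun m n => f m n.+1.
Definition Qm (f : nat -> nat -> F) : nat -> nat -> F := fun m n => s ^+ m * f m n.
Definition Qn (f : nat -> nat -> F) : nat -> nat -> F := fun m n => s ^+ n * f m n.
Definition fsub (f g : nat -> nat -> F) : nat -> nat -> F := fun m n => f m n - g m n.
Definition fscale (c : F) (f : nat -> nat -> F) : nat -> nat -> F :=
  fun m n => c * f m n.

Definition Abi (f : nat -> nat -> F) : nat -> nat -> F :=
  let g1 := fsub (fscale s (Qm (Qm (Em f)))) f in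
  let g2 := fsub (fscale s (Qn (Qn (En f)))) f in
  fsub (fsub (En g1) (fscale s (Qn (Qn g1))))
       (fsub (Em g2) (fscale s (Qm (Qm g2)))).
End Defs.

(* Every summand of V_W is separable: it equals (-1)^(m+n) c_i P_i(m) P_i(n)
   with P_i(m) = {m-i}_s {m-i+1}_s ... {m+i}_s, and P_i(m) vanishes once
   m <= i, so all four values of V_W seen by the (local, linear) operator are
   sums over the same range i <= m.  On one summand the operator is
   (-1)^(m+n) c_i times a combination of P_i(m), P_i(m+1), P_i(n), P_i(n+1);
   since P_i(m+1)/P_i(m) = {m+i+1}_s/{m-i}_s, after factoring out the common
   part of the products it becomes a Laurent-polynomial identity in s^m, s^n,
   s^i and s. *)
From mathcomp Require Import all_boot all_order all_algebra.
From mathcomp Require Import ring zify.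
Set Implicit Arguments. Unset Strict Implicit. Unset Printing Implicit Defensive.
Import GRing.Theory.
Local Open Scope ring_scope.

Section WhiteheadRecursion.
Variable F : fieldType.
Variable s : F.

Lemma AbiE (f : nat -> nat -> F) m n :
  Abi s f m n =
  (s ^+ (2 * m).+1 - s ^+ (2 * n).+1) * (f m.+1 n.+1 - f m n)
  + (s ^+ (2 * m).+1 * s ^+ (2 * n).+1 - 1) * (f m n.+1 - f m.+1 n).
Proof.
by rewrite /Abi /fsub /fscale /Qm /Qn /Em /En !exprS !mul2n -!addnn !exprD; ring.
Qed.

Lemma Abi_local (f h : nat -> nat -> F) m n :
    (forall a b, (a <= m.+1)%N -> (b <= n.+1)%N -> f a b = h a b) ->
  Abi s f m n = Abi s h m n.
Proof. by move=> fh; rewrite !AbiE !fh. Qed.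

Lemma Abi_sum (I : Type) (r : seq I) (f : I -> nat -> nat -> F) m n :
  Abi s (fun a b => \sum_(i <- r) f i a b) m n = \sum_(i <- r) Abi s (f i) m n.
Proof.
elim: r => [|i r IHr]; first by rewrite big_nil AbiE !big_nil; ring.
by rewrite big_cons -IHr !AbiE !big_cons; ring.
Qed.

(* [qdiff a b] is {a - b}_s with a signed difference *)
Definition qdiff (a b : nat) : F := s ^+ a * s ^- b - s ^+ b * s ^- a.

(* {m-i}_s {m-i+1}_s ... {m+i}_s, that is {m+i}_s! / {m-i-1}_s! when i < m *)
Definition qspan (m i : nat) : F := \prod_(j < (2 * i).+1) qdiff (m + j) i.

Definition qspan_inner (m i : nat) : F := \prod_(j < 2 * i) qdiff (m + j.+1) i.

Lemma qspanE m i : qspan m i = qdiff m i * qspan_inner m i.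
Proof. by rewrite /qspan big_ord_recl addn0. Qed.

Lemma qspanS m i : qspan m.+1 i = qspan_inner m i * qdiff (m + (2 * i).+1) i.
Proof.
rewrite /qspan big_ord_recr /= addSnnS.
by congr (_ * _); apply: eq_bigr => j _; rewrite addSnnS.
Qed.

Lemma qspan_eq0 m i : (m <= i)%N -> qspan m i = 0.
Proof.
move=> le_mi; have lt_j : (i - m < (2 * i).+1)%N by lia.
by rewrite /qspan (bigD1 (Ordinal lt_j)) //= subnKC // /qdiff subrr mul0r.
Qed.

Definition VW_coef (i : nat) : F :=
  s ^- ((i * i + 3 * i) %/ 2)%N * qfact s i / (qint s 1 * qfact s (2 * i + 1)).

Definition VW_term (i m n : nat) : F :=
  (-1) ^+ (m + n) * VW_coef i * (qspan m i * qspan n i).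

Hypothesis s_neq0 : s != 0.

Lemma qdiff_cross m n i :
  (s ^+ (2 * m).+1 - s ^+ (2 * n).+1)
    * (qdiff (m + (2 * i).+1) i * qdiff (n + (2 * i).+1) i - qdiff m i * qdiff n i)
  = (s ^+ (2 * m).+1 * s ^+ (2 * n).+1 - 1)
    * (qdiff m i * qdiff (n + (2 * i).+1) i - qdiff (m + (2 * i).+1) i * qdiff n i).
Proof.
have [sm_neq0 sn_neq0 si_neq0] : [/\ s ^+ m != 0, s ^+ n != 0 & s ^+ i != 0].
  by split; apply: expf_neq0.
rewrite /qdiff !mul2n -!addnn !(exprS, exprD).
by field; rewrite s_neq0 sm_neq0 sn_neq0 si_neq0.
Qed.

Lemma Abi_VW_term i m n : Abi s (VW_term i) m n = 0.
Proof.
have cross := qdiff_cross m n i.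
rewrite AbiE /VW_term !addSn !addnS !(exprS (-1)) !qspanS !qspanE.
set x := qdiff m i in cross *; set x' := qdiff (m + _) i in cross *.
set y := qdiff n i in cross *; set y' := qdiff (n + _) i in cross *.
set A := (_ - s ^+ _) in cross *; set B := (_ - 1) in cross *.
transitivity ((-1) ^+ (m + n) * VW_coef i * qspan_inner m i * qspan_inner n i
  * (A * (x' * y' - x * y) - B * (x * y' - x' * y))); first by ring.
by rewrite cross subrr mulr0.
Qed.

Hypothesis qint_neq0 : forall k : nat, (0 < k)%N -> qint s k != 0.

Lemma qfact_neq0 k : qfact s k != 0.
Proof.
rewrite prodf_seq_neq0; apply/allP => j.
by rewrite mem_index_iota => /andP[j_gt0 _]; apply: qint_neq0.
Qed.

Lemma qfact_addE m i : (i < m)%N -> qfact s (m + i) = qfact s (m - i - 1) * qspan m i.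
Proof.
move=> lt_im; rewrite /qfact (@big_cat_nat _ _ _ (m - i - 1).+1) //=; last by lia.
congr (_ * _); rewrite -{1}[(m - i - 1).+1]add0n big_addn big_mkord.
have -> : ((m + i).+1 - (m - i - 1).+1 = (2 * i).+1)%N by lia.
apply: eq_bigr => j _; rewrite /qint /qdiff.
have -> : (m + j = (j + (m - i - 1).+1) + i)%N by lia.
set k := (j + (m - i - 1).+1)%N.
have [sk_neq0 si_neq0] : s ^+ k != 0 /\ s ^+ i != 0 by split; apply: expf_neq0.
by rewrite exprD; field; rewrite sk_neq0 si_neq0.
Qed.

Lemma VW_summandE m n i : (i < minn m n)%N ->
    (-1) ^+ (m + n) * s ^- ((i * i + 3 * i) %/ 2)%N *
    (qfact s (m + i) * qfact s (n + i) * qfact s i) /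
    (qint s 1 * qfact s (m - i - 1) * qfact s (n - i - 1) * qfact s (2 * i + 1))
  = VW_term i m n.
Proof.
rewrite leq_min => /andP[lt_im lt_in].
rewrite (qfact_addE lt_im) (qfact_addE lt_in) /VW_term /VW_coef.
have q1_neq0 := qint_neq0 (isT : (0 < 1)%N).
by field; rewrite !qfact_neq0 q1_neq0 expf_neq0.
Qed.

Lemma VW_sum N m n : (minn m n <= N)%N -> VW s m n = \sum_(i < N) VW_term i m n.
Proof.
move=> le_minN; rewrite -(subnKC le_minN) big_split_ord /=.
rewrite [X in _ + X]big1 ?addr0 => [|i _].
  by apply: eq_bigr => i _; apply: VW_summandE.
have /orP[le_m|le_n] : (m <= minn m n + i)%N || (n <= minn m n + i)%N.
  by rewrite -!geq_min; apply: leq_addr.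
- by rewrite /VW_term qspan_eq0 // !mul0r mulr0.
- by rewrite /VW_term [qspan n _]qspan_eq0 // !mulr0.
Qed.

End WhiteheadRecursion.

Theorem mainTheorem2 (F : fieldType) (s : F)
    (hs0 : s != 0) (hs : forall k : nat, (0 < k)%N -> qint s k != 0)
    (m n : nat) (hm : (0 < m)%N) (hn : (0 < n)%N) :
  Abi s (VW s) m n = 0.
Proof.
rewrite (@Abi_local _ _ _ (fun a b => \sum_(i < m.+1) VW_term s i a b)) => [|a b le_a _].
  by rewrite Abi_sum big1 // => i _; apply: Abi_VW_term.
by apply: VW_sum => //; rewrite geq_min le_a.
Qed.
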